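(* There is no kernel on $\mathbf{R}$ that is shiftable. That is, there is no function $\varphi:\mathbf{R}\to\mathbf{R}$ which is simultaneously (i) a kernel on the entire real line and (ii) shiftable on $\mathbf{R}$.
   Context: A function $\varphi:\mathbf{R}\to\mathbf{R}$ is called shiftable if there exist finitely many fixed functions $\varphi_1,\ldots,\varphi_N:\mathbf{R}\to\mathbf{R}$ such that for every $\tau\in\mathbf{R}$ there are coefficients $c_1(\tau),\ldots,c_N(\tau)\in\mathbf{R}$ with $\varphi(x-\tau)=c_1(\tau)\varphi_1(x)+\cdots+c_N(\tau)\varphi_N(x)$ for all $x\in\mathbf{R}$. A kernel is a smooth function $\varphi:\mathbf{R}\to\mathbf{R}$ that is symmetric ($\varphi(-x)=\varphi(x)$ for all $x$), non-negative ($\varphi(x)\ge 0$ for all $x$), and unimodal with peak at the origin, meaning $\varphi$ is strictly increasing on $(-\infty,0]$ and strictly decreasing on $[0,\infty)$. *)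

From Stdlib Require Import Reals.
From Coquelicot Require Import Coquelicot.
Open Scope R_scope.

(* phi is C^infinity: every iterated derivative exists everywhere.
   Coquelicot's [ex_derive_n f (S n) x] says Derive_n f n is differentiable
   at x ([ex_derive_n f 0 x] is True). *)
Definition smooth (phi : R -> R) : Prop :=
  forall (n : nat) (x : R), ex_derive_n phi n x.

Definition is_kernel (phi : R -> R) : Prop :=
  smooth phi /\
  (forall x, phi (- x) = phi x) /\
  (forall x, 0 <= phi x) /\
  (forall x y, x < y -> y <= 0 -> phi x < phi y) /\
  (forall x y, 0 <= x -> x < y -> phi y < phi x).

Fixpoint fsum (N : nat) (f : nat -> R) : R :=
  match N with
  | O => 0
  | S n => fsum n f + f n
  end.

(* Shiftable: finitely many fixed functions phi_1..phi_N (here indexed by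
   i = 0..N-1) such that every translate phi(. - tau) is a linear combination
   c_1(tau) phi_1 + ... + c_N(tau) phi_N. *)
Definition shiftable (phi : R -> R) : Prop :=
  exists (N : nat) (basis : nat -> R -> R),
    forall tau : R, exists c : nat -> R,
      forall x : R, phi (x - tau) = fsum N (fun i => c i * basis i x).

From Stdlib Require Import Reals Lra Lia Classical ClassicalEpsilon.
From Coquelicot Require Import Coquelicot.
Open Scope R_scope.

(* If [phi] is shiftable through [N] functions, the [N + 1] functions
   [g_k x = phi (x - k T) - phi (x - k T + 1)], [k = 0 .. N], lie in an
   [N]-dimensional space and so satisfy a nontrivial linear relation.  But a
   kernel is monotone and bounded on each half-line, so its unit drops
   [phi u - phi (u + 1)] tend to [0] as [|u| -> oo]; for [T] large the matrix
   [(g_k (j T))] is therefore diagonally dominant, with diagonal entries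
   [phi 0 - phi 1 > 0], and admits no nontrivial relation. *)

Lemma fsum_ext M f g :
  (forall k, (k < M)%nat -> f k = g k) -> fsum M f = fsum M g.
Proof.
  induction M; simpl; intros H; auto.
  rewrite IHM by (intros; apply H; lia). rewrite H by lia. reflexivity.
Qed.

Lemma fsum_zero M f : (forall k, (k < M)%nat -> f k = 0) -> fsum M f = 0.
Proof.
  intros H. rewrite (fsum_ext M f (fun _ => 0)) by auto.
  induction M; simpl; [reflexivity | rewrite IHM; [ring | intros; apply H; lia]].
Qed.

Lemma fsum_add_scal M f g r :
  fsum M (fun k => f k + r * g k) = fsum M f + r * fsum M g.
Proof. induction M; simpl; [ring | rewrite IHM; ring]. Qed.

Lemma fsum_exchange M N a c b :
  fsum M (fun k => a k * fsum N (fun i => c k i * b i)) =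
  fsum N (fun i => fsum M (fun k => a k * c k i) * b i).
Proof.
  induction M; simpl.
  - symmetry; apply fsum_zero; intros; ring.
  - rewrite IHM, <- fsum_add_scal.
    apply fsum_ext; intros; ring.
Qed.

Lemma fsum_indicator M j f v : (j < M)%nat ->
  fsum M (fun k => f k * (if Nat.eqb k j then v else 0)) = f j * v.
Proof.
  induction M; intros Hj; [lia|]. simpl.
  destruct (Nat.eqb_spec M j) as [->|Hne].
  - rewrite fsum_zero; [ring|].
    intros k Hk. destruct (Nat.eqb_spec k j); [lia|ring].
  - rewrite IHM by lia. ring.
Qed.

Lemma fsum_abs_le M f B : (forall k, (k < M)%nat -> Rabs (f k) <= B) ->
  Rabs (fsum M f) <= INR M * B.
Proof.
  induction M; intros H; simpl fsum.
  - rewrite Rabs_R0; simpl; lra.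
  - rewrite S_INR.
    pose proof (IHM (fun k Hk => H k ltac:(lia))).
    pose proof (H M ltac:(lia)).
    pose proof (Rabs_triang (fsum M f) (f M)). lra.
Qed.

Lemma exists_abs_max M (a : nat -> R) : (0 < M)%nat ->
  exists j, (j < M)%nat /\ forall k, (k < M)%nat -> Rabs (a k) <= Rabs (a j).
Proof.
  induction M as [|[|M] IHM]; intros HM; [lia| |].
  - exists 0%nat; split; [lia|]. intros k Hk. replace k with 0%nat by lia. lra.
  - destruct IHM as [j [Hj Hmax]]; [lia|].
    destruct (Rle_dec (Rabs (a (S M))) (Rabs (a j))).
    + exists j; split; [lia|]. intros k Hk.
      destruct (Nat.eq_dec k (S M)) as [->|]; [auto | apply Hmax; lia].
    + exists (S M); split; [lia|]. intros k Hk.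
      destruct (Nat.eq_dec k (S M)) as [->|]; [lra|].
      pose proof (Hmax k ltac:(lia)); lra.
Qed.

Definition skip (p k : nat) : nat := if Nat.ltb k p then k else S k.

Definition insert (p : nat) (v : R) (a : nat -> R) (k : nat) : R :=
  if Nat.eqb k p then v else if Nat.ltb k p then a k else a (pred k).

Lemma skip_lt p m k : (p <= m)%nat -> (k < m)%nat -> (skip p k < S m)%nat.
Proof. intros; unfold skip; destruct (Nat.ltb_spec k p); lia. Qed.

Lemma insert_skip p v a k : insert p v a (skip p k) = a k.
Proof.
  unfold insert, skip.
  destruct (Nat.ltb_spec k p).
  - destruct (Nat.eqb_spec k p); [lia|]. destruct (Nat.ltb_spec k p); [auto|lia].
  - destruct (Nat.eqb_spec (S k) p); [lia|]. destruct (Nat.ltb_spec (S k) p); [lia|auto].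
Qed.

Lemma insert_at p v a : insert p v a p = v.
Proof. unfold insert; rewrite Nat.eqb_refl; reflexivity. Qed.

Lemma fsum_skip m p g : (p <= m)%nat ->
  fsum (S m) g = fsum m (fun k => g (skip p k)) + g p.
Proof.
  induction m as [|m IHm]; intros Hp.
  - replace p with 0%nat by lia; simpl; ring.
  - change (fsum (S (S m)) g) with (fsum (S m) g + g (S m)).
    destruct (Nat.eq_dec p (S m)) as [->|Hne].
    + f_equal. apply fsum_ext. intros k Hk. unfold skip.
      destruct (Nat.ltb_spec k (S m)); [auto | lia].
    + rewrite IHm by lia. simpl fsum.
      unfold skip at 3. destruct (Nat.ltb_spec m p); [lia|]. ring.
Qed.

(* Row [k] of the result is row [skip p k] of [c] minus the multiple of the
   pivot row [p] that clears column [n]. *)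
Definition eliminate (c : nat -> nat -> R) (p n k i : nat) : R :=
  c (skip p k) i - c (skip p k) n / c p n * c p i.

Lemma eliminate_relation m N c p a : (p <= m)%nat -> c p N <> 0 ->
  (forall i, (i < N)%nat -> fsum m (fun k => a k * eliminate c p N k i) = 0) ->
  forall i, (i <= N)%nat ->
  fsum (S m) (fun k =>
    insert p (- fsum m (fun k => a k * c (skip p k) N) / c p N) a k * c k i) = 0.
Proof.
  intros Hp Hpiv Ha i Hi.
  set (s := fsum m (fun k => a k * c (skip p k) N)).
  rewrite (fsum_skip m p) by assumption.
  rewrite insert_at.
  rewrite (fsum_ext m _ (fun k => a k * c (skip p k) i))
    by (intros; rewrite insert_skip; reflexivity).
  destruct (Nat.eq_dec i N) as [->|Hne].
  - fold s. field. exact Hpiv.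
  - specialize (Ha i ltac:(lia)).
    rewrite (fsum_ext m _ (fun k => a k * c (skip p k) i
                                   + (- (c p i / c p N)) * (a k * c (skip p k) N)))
      in Ha by (intros; unfold eliminate; field; exact Hpiv).
    rewrite fsum_add_scal in Ha. fold s in Ha.
    replace (- s / c p N * c p i) with (- (c p i / c p N) * s) by (field; exact Hpiv).
    exact Ha.
Qed.

Lemma rows_dependent N M (c : nat -> nat -> R) : (N < M)%nat ->
  exists a : nat -> R, (exists k, (k < M)%nat /\ a k <> 0) /\
    forall i, (i < N)%nat -> fsum M (fun k => a k * c k i) = 0.
Proof.
  revert M c; induction N as [|N IHN]; intros M c HNM.
  - exists (fun _ => 1). split; [exists 0%nat; split; [lia|lra] | intros; lia].
  - destruct (classic (forall k, (k < M)%nat -> c k N = 0)) as [Hzero|Hpivot].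
    + destruct (IHN M c ltac:(lia)) as [a [Hnz Ha]].
      exists a; split; [exact Hnz|]. intros i Hi.
      destruct (Nat.eq_dec i N) as [->|].
      * apply fsum_zero. intros k Hk; rewrite Hzero by assumption; ring.
      * apply Ha; lia.
    + apply not_all_ex_not in Hpivot as [p Hp].
      apply imply_to_and in Hp as [Hp Hpiv].
      destruct M as [|m]; [lia|].
      destruct (IHN m (eliminate c p N) ltac:(lia)) as [a [[k0 [Hk0 Hak0]] Ha]].
      exists (insert p (- fsum m (fun k => a k * c (skip p k) N) / c p N) a); split.
      * exists (skip p k0). split; [apply skip_lt; lia|].
        rewrite insert_skip; exact Hak0.
      * intros i Hi. apply eliminate_relation; auto; lia.
Qed.

Definition in_span (N : nat) (b : nat -> R -> R) (f : R -> R) : Prop :=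
  exists c : nat -> R, forall x, f x = fsum N (fun i => c i * b i x).

Lemma in_span_sub N b f g :
  in_span N b f -> in_span N b g -> in_span N b (fun x => f x - g x).
Proof.
  intros [cf Hf] [cg Hg]. exists (fun i => cf i + (-1) * cg i). intros x.
  rewrite Hf, Hg, <- (Rplus_0_r (fsum N _)).
  replace (fsum N (fun i => cf i * b i x) + 0 - fsum N (fun i => cg i * b i x))
    with (fsum N (fun i => cf i * b i x) + (-1) * fsum N (fun i => cg i * b i x))
    by ring.
  rewrite <- fsum_add_scal. apply fsum_ext; intros; ring.
Qed.

Lemma span_dependent N M b (f : nat -> R -> R) : (N < M)%nat ->
  (forall k, in_span N b (f k)) ->
  exists a : nat -> R, (exists k, (k < M)%nat /\ a k <> 0) /\
    forall x, fsum M (fun k => a k * f k x) = 0.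
Proof.
  intros HNM Hspan.
  set (c k := proj1_sig (constructive_indefinite_description _ (Hspan k))).
  assert (Hc : forall k x, f k x = fsum N (fun i => c k i * b i x)).
  { intros k x. unfold c. destruct constructive_indefinite_description; auto. }
  destruct (rows_dependent N M c HNM) as [a [Hnz Ha]].
  exists a; split; [exact Hnz|]. intros x.
  rewrite (fsum_ext M _ (fun k => a k * fsum N (fun i => c k i * b i x)))
    by (intros; rewrite Hc; reflexivity).
  rewrite fsum_exchange. apply fsum_zero. intros i Hi. rewrite Ha by assumption. ring.
Qed.

Lemma diagonally_dominant_relation M (a e : nat -> R) j eps :
  0 <= eps -> (j < M)%nat -> (forall k, (k < M)%nat -> Rabs (a k) <= Rabs (a j)) ->
  (forall k, (k < M)%nat -> k <> j -> Rabs (e k) <= eps) ->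
  INR M * eps < Rabs (e j) ->
  fsum M (fun k => a k * e k) = 0 -> a j = 0.
Proof.
  intros Heps Hj Hmax Hoff Hdiag Hrel.
  set (off k := e k - (if Nat.eqb k j then e j else 0)).
  assert (Hsplit : fsum M (fun k => a k * e k)
                   = fsum M (fun k => a k * off k) + 1 * (a j * e j)).
  { rewrite <- (fsum_indicator M j a (e j) Hj), <- fsum_add_scal.
    apply fsum_ext; intros; unfold off; ring. }
  assert (Hbound : Rabs (fsum M (fun k => a k * off k)) <= INR M * (Rabs (a j) * eps)).
  { apply fsum_abs_le. intros k Hk. rewrite Rabs_mult.
    apply Rmult_le_compat; try apply Rabs_pos; [auto|].
    unfold off. destruct (Nat.eqb_spec k j) as [->|Hne].
    - rewrite Rminus_diag, Rabs_R0. exact Heps.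
    - rewrite Rminus_0_r. auto. }
  rewrite Hrel in Hsplit.
  replace (fsum M (fun k => a k * off k)) with (- (a j * e j)) in Hbound by lra.
  rewrite Rabs_Ropp, Rabs_mult in Hbound.
  destruct (Req_dec (a j) 0) as [|Hne]; [assumption|].
  pose proof (Rabs_pos_lt _ Hne). nra.
Qed.

Lemma INR_separated j k : j <> k -> 1 <= Rabs (INR j - INR k).
Proof.
  intros Hne. apply Nat.lt_gt_cases in Hne as [Hlt|Hlt].
  - pose proof (le_INR (S j) k Hlt) as H. rewrite S_INR in H.
    rewrite Rabs_left; lra.
  - pose proof (le_INR (S k) j Hlt) as H. rewrite S_INR in H.
    rewrite Rabs_pos_eq; lra.
Qed.

Section UnitDrops.

Variables (phi : R -> R) (m : R).
Hypothesis phi_ge : forall x, m <= phi x.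
Hypothesis phi_nonincreasing : forall x y, 0 <= x -> x <= y -> phi y <= phi x.

(* Otherwise drops of size [eps] recur beyond every point, and [n] of them
   push [phi] below [phi 0 - n eps], eventually below [m]. *)
Lemma unit_drop_vanishes eps : 0 < eps ->
  exists T, 0 <= T /\ forall t, T <= t -> phi t - phi (t + 1) < eps.
Proof.
  intros Heps. apply NNPP. intros Hno.
  assert (Hrecur : forall T, 0 <= T ->
            exists t, T <= t /\ eps <= phi t - phi (t + 1)).
  { intros T HT. apply NNPP. intros Hn. apply Hno. exists T. split; [exact HT|].
    intros t Ht. apply Rnot_le_lt. intros Hle. apply Hn. exists t; auto. }
  assert (Hdescent : forall n : nat,
            exists t, 0 <= t /\ phi t <= phi 0 - INR n * eps).
  { induction n as [|n [t [Ht Hpt]]].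
    - exists 0. simpl; lra.
    - destruct (Hrecur t Ht) as [t' [Ht' Hdrop]].
      pose proof (phi_nonincreasing t t' Ht Ht').
      exists (t' + 1). rewrite S_INR. split; lra. }
  destruct (INR_unbounded ((phi 0 - m) / eps)) as [n Hn].
  destruct (Hdescent n) as [t [_ Hpt]].
  pose proof (phi_ge t).
  apply Rmult_lt_compat_r with (r := eps) in Hn; [|exact Heps].
  unfold Rdiv in Hn. rewrite Rmult_assoc, Rinv_l in Hn by lra. lra.
Qed.

Hypothesis phi_even : forall x, phi (- x) = phi x.

Lemma even_unit_drop_vanishes eps : 0 < eps ->
  exists T, 0 <= T /\ forall u, T <= Rabs u -> Rabs (phi u - phi (u + 1)) < eps.
Proof.
  intros Heps. destruct (unit_drop_vanishes eps Heps) as [T0 [HT0 Hdrop]].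
  exists (T0 + 1). split; [lra|]. intros u Hu.
  destruct (Rle_dec 0 u).
  - rewrite Rabs_pos_eq in Hu by assumption.
    pose proof (phi_nonincreasing u (u + 1) ltac:(lra) ltac:(lra)).
    pose proof (Hdrop u ltac:(lra)).
    rewrite Rabs_pos_eq; lra.
  - rewrite Rabs_left in Hu by lra.
    set (s := - u - 1).
    rewrite <- (phi_even u), <- (phi_even (u + 1)).
    replace (- u) with (s + 1) by (unfold s; ring).
    replace (- (u + 1)) with s by (unfold s; ring).
    pose proof (phi_nonincreasing s (s + 1) ltac:(unfold s; lra) ltac:(lra)).
    pose proof (Hdrop s ltac:(unfold s; lra)).
    rewrite Rabs_left1; lra.
Qed.

Definition drop_translate (T : R) (k : nat) (x : R) : R :=
  phi (x - INR k * T) - phi (x - (INR k * T - 1)).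

Hypothesis phi_drops : phi 1 < phi 0.

Lemma drop_translates_independent M : exists T,
  forall a : nat -> R, (forall x, fsum M (fun k => a k * drop_translate T k x) = 0) ->
  forall k, (k < M)%nat -> a k = 0.
Proof.
  set (delta := phi 0 - phi 1).
  set (eps := delta / (2 * (INR M + 1))).
  assert (Heps : 0 < eps).
  { unfold eps, delta. pose proof (pos_INR M).
    apply Rdiv_lt_0_compat; lra. }
  destruct (even_unit_drop_vanishes eps Heps) as [T [HT Hsmall]].
  exists T. intros a Hrel k0 Hk0.
  destruct (exists_abs_max M a ltac:(lia)) as [j [Hj Hmax]].
  assert (Haj : a j = 0).
  { apply (diagonally_dominant_relation M a (fun k => drop_translate T k (INR j * T))
             j eps); [lra | exact Hj | exact Hmax | | | apply Hrel].
    - intros k Hk Hkj. unfold drop_translate.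
      set (u := INR j * T - INR k * T).
      replace (INR j * T - (INR k * T - 1)) with (u + 1) by (unfold u; ring).
      left. apply Hsmall. unfold u.
      rewrite <- Rmult_minus_distr_r, Rabs_mult, (Rabs_pos_eq T HT).
      pose proof (INR_separated j k ltac:(lia)). nra.
    - unfold drop_translate.
      replace (INR j * T - INR j * T) with 0 by ring.
      replace (INR j * T - (INR j * T - 1)) with 1 by ring.
      fold delta. rewrite Rabs_pos_eq by (unfold delta; lra).
      unfold eps. pose proof (pos_INR M).
      apply (Rmult_lt_reg_r (2 * (INR M + 1))); [lra|].
      field_simplify; [|lra]. unfold delta in *; nra. }
  pose proof (Hmax k0 Hk0). rewrite Haj, Rabs_R0 in *.
  destruct (Req_dec (a k0) 0) as [|Hne]; [assumption|].
  pose proof (Rabs_pos_lt _ Hne). lra.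
Qed.

End UnitDrops.

Theorem mainTheorem1 : ~ (exists phi : R -> R, is_kernel phi /\ shiftable phi).
Proof.
  intros [phi [[_ [Heven [Hnonneg [_ Hdec]]]] [N [b Hspan]]]].
  assert (Hnonincr : forall x y, 0 <= x -> x <= y -> phi y <= phi x).
  { intros x y Hx Hxy. destruct (Req_dec x y) as [->|]; [lra|].
    left; apply Hdec; lra. }
  destruct (drop_translates_independent phi 0 Hnonneg Hnonincr Heven
              ltac:(apply Hdec; lra) (S N)) as [T Hindep].
  destruct (span_dependent N (S N) b (drop_translate phi T) ltac:(lia))
    as [a [[k [Hk Hak]] Hrel]].
  - intros k. apply in_span_sub; apply Hspan.
  - exact (Hak (Hindep a Hrel k Hk)).
Qed.
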